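(* Let $(X,C)$ be a separable convexity space and let $B$ be the family of its half-spaces. If the Radon number of $(X,C)$ is $r$, then the VC dimension of $B$ and the Helly number of $B$ are both less than $r$.
   Context: A convexity space is a pair $(X,C)$ with $C\subseteq 2^X$ such that $\emptyset, X\in C$ and $C$ is closed under arbitrary intersections. The convex hull $conv(Y)$ is the intersection of all $c\in C$ containing $Y$. A half-space is a $b\in C$ with $X\setminus b\in C$. $(X,C)$ is separable if for every $c\in C$ and $x\in X\setminus c$ there is a half-space $b$ with $c\subseteq b$, $x\notin b$. $C$ Radon-shatters $Y$ if for every partition $Y=Y_1\sqcup Y_2$, $conv(Y_1)\cap conv(Y_2)=\emptyset$; the Radon number is the minimum $r$ such that no set of size $r$ is Radon-shattered. The Helly number of a family $B$ is the minimum $h$ such that every finite $B'\subseteq B$ with $\bigcap B'=\emptyset$ contains a subfamily of at most $h$ sets with empty intersection. The VC dimension of $B\subseteq 2^X$ is the supremum of $v$ such that some $Y\subseteq X$ with $|Y|=v$ satisfies: for every $Z\subseteq Y$ there is $b\in B$ with $b\cap Y=Z$. *)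

From mathcomp Require Import all_boot all_order.
From mathcomp Require Import boolp classical_sets.
Set Implicit Arguments. Unset Strict Implicit. Unset Printing Implicit Defensive.
Local Open Scope classical_set_scope.

Definition convexity_space (X : Type) (C : set (set X)) : Prop :=
  C set0 /\ C setT /\
  (forall F : set (set X), F `<=` C -> C (\bigcap_(c in F) c)).

Definition conv (X : Type) (C : set (set X)) (Y : set X) : set X :=
  \bigcap_(c in [set c | C c /\ Y `<=` c]) c.

Definition half_space (X : Type) (C : set (set X)) (b : set X) : Prop :=
  C b /\ C (~` b).

Definition half_spaces (X : Type) (C : set (set X)) : set (set X) :=
  [set b | half_space C b].

Definition separable (X : Type) (C : set (set X)) : Prop :=
  forall (c : set X) (x : X), C c -> ~ c x ->
    exists b, half_space C b /\ c `<=` b /\ ~ b x.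

Definition has_size (X : Type) (Y : set X) (n : nat) : Prop :=
  exists f : 'I_n -> X, injective f /\ range f = Y.

Definition radon_shatters (X : Type) (C : set (set X)) (Y : set X) : Prop :=
  forall Y1 Y2 : set X, Y1 `|` Y2 = Y -> Y1 `&` Y2 = set0 ->
    conv C Y1 `&` conv C Y2 = set0.

Definition no_radon_shattered_of_size (X : Type) (C : set (set X)) (r : nat) :=
  forall Y : set X, has_size Y r -> ~ radon_shatters C Y.

Definition radon_number (X : Type) (C : set (set X)) (r : nat) : Prop :=
  no_radon_shattered_of_size C r /\
  (forall r', (r' < r)%N -> ~ no_radon_shattered_of_size C r').

Definition helly_prop (X : Type) (B : set (set X)) (h : nat) : Prop :=
  forall (n : nat) (b : 'I_n -> set X), (forall i, B (b i)) ->
    \bigcap_(i in [set: 'I_n]) b i = set0 ->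
    exists S : {set 'I_n}, (#|S| <= h)%N /\
      \bigcap_(i in [set i | i \in S]) b i = set0.

Definition helly_number (X : Type) (B : set (set X)) (h : nat) : Prop :=
  helly_prop B h /\ (forall h', (h' < h)%N -> ~ helly_prop B h').

Definition vc_shatters (X : Type) (B : set (set X)) (Y : set X) : Prop :=
  forall Z : set X, Z `<=` Y -> exists b, B b /\ b `&` Y = Z.

(* v is the VC dimension (the supremum, here a finite maximum) *)
Definition vc_dim (X : Type) (B : set (set X)) (v : nat) : Prop :=
  (exists Y : set X, has_size Y v /\ vc_shatters B Y) /\
  (forall (Y : set X) (m : nat), has_size Y m -> vc_shatters B Y -> (m <= v)%N).

From mathcomp Require Import all_boot all_order.
From mathcomp Require Import boolp classical_sets.
Set Implicit Arguments. Unset Strict Implicit. Unset Printing Implicit Defensive.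
Local Open Scope classical_set_scope.

(* VC bound: a set shattered by half-spaces is Radon-shattered, since the
   half-space cutting out Y1 separates conv Y1 from conv Y2; so no such set
   has r elements.
   Helly bound (Levi): take a minimal subfamily S of convex sets with empty
   intersection; if |S| >= r, pick for r indices j of S a point x_j in every
   member of S except b_j.  These points are distinct and admit a Radon
   partition Y1, Y2; each b_j contains all of the points but at most x_j,
   hence contains Y1 or Y2 and so the common point of conv Y1 and conv Y2.
   That point then lies in every member of S, a contradiction. *)

Section SetFamilies.
Variable X : Type.
Implicit Types (B : set (set X)) (Y : set X).

Lemma has_size0 : has_size (@set0 X) 0.
Proof.
exists (fun i : 'I_0 => False_rect X (notF (ltn_ord i))); split; first by case.
by apply/seteqP; split=> // x [[]].
Qed.

Lemma widen_ord_inj n m (le_nm : (n <= m)%N) : injective (widen_ord le_nm).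
Proof. by move=> i j [] /val_inj. Qed.

Lemma vc_shattersS B Y Y' : Y' `<=` Y -> vc_shatters B Y -> vc_shatters B Y'.
Proof.
move=> sY'Y shY Z sZY'; have [b [Bb bYZ]] := shY Z (subset_trans sZY' sY'Y).
by exists b; split; rewrite // -(setIidr sY'Y) setIA bYZ setIidl.
Qed.

Lemma vc_shatters_set0 B b : B b -> vc_shatters B set0.
Proof. by move=> Bb Z; rewrite subset0 => ->; exists b; rewrite setI0. Qed.

Lemma vc_dim_le B N : B !=set0 ->
  (forall Y m, has_size Y m -> vc_shatters B Y -> (m <= N)%N) ->
  exists2 v, vc_dim B v & (v <= N)%N.
Proof.
move=> [b Bb] boundB.
pose P m := `[< exists Y, has_size Y m /\ vc_shatters B Y >].
have P0 : exists m, P m by exists 0%N; apply/asboolP; exists set0;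
  split; [exact: has_size0 | exact: vc_shatters_set0 Bb].
have boundP m : P m -> (m <= N)%N by move=> /asboolP [Y [/boundB]].
case: (ex_maxnP P0 boundP) => v /asboolP Pv maxv.
exists v; last exact: boundP (asboolT Pv).
by split=> // Y m sizeY shY; apply/maxv/asboolP; exists Y.
Qed.

Lemma helly_propS B B' h : B' `<=` B -> helly_prop B h -> helly_prop B' h.
Proof. by move=> sB'B hellyB n b B'b; apply: hellyB => i; apply/sB'B. Qed.

Lemma helly_number_le B N : helly_prop B N -> exists2 h, helly_number B h & (h <= N)%N.
Proof.
move=> hellyN; pose P h := `[< helly_prop B h >].
case: (ex_minnP (ex_intro P N (asboolT hellyN))) => h /asboolP Ph minh.
exists h; last exact: minh (asboolT hellyN).
split=> // h' lt_h'h /asboolP /minh; by rewrite leqNgt lt_h'h.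
Qed.

End SetFamilies.

Section ConvexitySpace.
Variables (X : Type) (C : set (set X)).

Lemma conv_sub Y c : C c -> Y `<=` c -> conv C Y `<=` c.
Proof. by move=> Cc sYc x; apply. Qed.

Lemma half_space0 : C set0 -> C setT -> half_space C set0.
Proof. by rewrite /half_space setC0. Qed.

Lemma vc_shatters_radon Y : vc_shatters (half_spaces C) Y -> radon_shatters C Y.
Proof.
move=> shY Y1 Y2 Y12 disjY12.
have sY1Y : Y1 `<=` Y by rewrite -Y12; exact: subsetUl.
have [b [[Cb Cnb] bY]] := shY Y1 sY1Y.
have conv1 : conv C Y1 `<=` b by apply: conv_sub => // x; rewrite -bY => -[].
have conv2 : conv C Y2 `<=` ~` b.
  apply: conv_sub => // x Y2x bx; suff : (Y1 `&` Y2) x by rewrite disjY12.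
  by split=> //; rewrite -bY -Y12; split=> //; right.
by rewrite -subset0 => x [/conv1 ? /conv2].
Qed.

Lemma vc_shattered_size_lt r Y m : no_radon_shattered_of_size C r ->
  has_size Y m -> vc_shatters (half_spaces C) Y -> (m < r)%N.
Proof.
move=> noR [f [f_inj fY]] shY; rewrite ltnNge; apply/negP => le_rm.
pose g := f \o widen_ord le_rm.
apply: (noR (range g)).
  by exists g; split=> //; apply: inj_comp f_inj (widen_ord_inj (le_nm := le_rm)).
apply/vc_shatters_radon/(vc_shattersS _ shY).
by rewrite -fY => _ [k _ <-]; exists (widen_ord le_rm k).
Qed.

Lemma conv_radon_partition_sub Y1 Y2 c z : C c -> Y1 `&` Y2 = set0 ->
  (Y1 `|` Y2) `\ z `<=` c -> conv C Y1 `&` conv C Y2 `<=` c.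
Proof.
move=> Cc disjY12 sYc p [conv1p conv2p].
have [Y1z | nY1z] := pselect (Y1 z).
  apply: conv_sub conv2p => // y Y2y; apply: sYc; split; first by right.
  move=> /= yz; rewrite yz in Y2y.
  by have : (Y1 `&` Y2) z by []; rewrite disjY12.
apply: conv_sub conv1p => // y Y1y; apply: sYc; split; first by left.
by move=> /= yz; rewrite yz in Y1y.
Qed.

Lemma minimal_empty_cap_card_lt r n (b : 'I_n -> set X) (S : {set 'I_n}) :
  no_radon_shattered_of_size C r -> (forall i, C (b i)) ->
  (forall y, ~ (forall i, i \in S -> b i y)) ->
  (forall j, j \in S -> exists y, forall i, i \in S -> i != j -> b i y) ->
  (#|S| < r)%N.
Proof.
move=> noR Cb emptyS puncturedS; rewrite ltnNge; apply/negP => le_rS.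
pose e k := enum_val (widen_ord le_rS k) : 'I_n.
have e_inj : injective e := inj_comp (@enum_val_inj _ _) (widen_ord_inj (le_nm := le_rS)).
have [x xP] := choice (fun k => puncturedS (e k) (enum_valP _)).
have x_inj : injective x.
  move=> k k' xkk'; apply: contrapT => nkk'; apply: (emptyS (x k)) => i iS.
  have [-> | ne] := eqVneq i (e k); last exact: xP.
  by rewrite xkk'; apply: xP; [exact: enum_valP | apply/eqP => /e_inj].
apply: (noR (range x)); first by exists x.
move=> Y1 Y2 Y12 disjY12; rewrite -subset0 => p pY12; apply: (emptyS p) => i iS.
have [[k eki] | nei] := pselect (exists k, e k = i).
  apply: (conv_radon_partition_sub (z := x k)) pY12 => //.
  rewrite Y12 => _ [[k' _ <-] /= nxk]; apply: xP; rewrite // -eki.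
  by apply/eqP => /e_inj kk'; apply: nxk; rewrite kk'.
apply: (conv_radon_partition_sub (z := p)) pY12 => //.
rewrite Y12 => _ [[k' _ <-] _]; apply: xP => //.
by apply/eqP => ek'; apply: nei; exists k'.
Qed.

Lemma helly_prop_of_no_radon r : no_radon_shattered_of_size C r -> helly_prop C r.-1.
Proof.
move=> noR n b Cb capT.
pose P := [pred S : {set 'I_n} | `[< \bigcap_(i in [set i | i \in S]) b i = set0 >]].
have PT : P [set: 'I_n]%SET.
  apply/asboolP; rewrite -capT; congr bigcap.
  by apply/seteqP; split=> i _ //=; rewrite inE.
have [S /minsetP [/asboolP capS minS] _] := minset_exists PT.
have emptyS y : ~ (forall i, i \in S -> b i y).
  by move=> capy; have : (\bigcap_(i in [set i | i \in S]) b i) y by []; rewrite capS.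
have puncturedS j : j \in S -> exists y, forall i, i \in S -> i != j -> b i y.
  move=> jS; apply: contrapT => no_y.
  have /setP /(_ j) : S :\ j = S.
    apply: minS; last exact: subD1set.
    apply/asboolP; rewrite -subset0 => y capy; apply: no_y; exists y => i iS ne.
    by apply: capy; rewrite /= !inE ne.
  by rewrite setD11 jS.
have lt_Sr := minimal_empty_cap_card_lt noR Cb emptyS puncturedS.
by exists S; rewrite -ltnS (ltn_predK lt_Sr).
Qed.

End ConvexitySpace.

Theorem lemma1 (X : Type) (C : set (set X)) (r : nat) :
  convexity_space C -> separable C -> radon_number C r ->
  (exists v : nat, vc_dim (half_spaces C) v /\ (v < r)%N) /\
  (exists h : nat, helly_number (half_spaces C) h /\ (h < r)%N).
Proof.
move=> [C0 [CT _]] _ [noR _].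
have B0 : half_spaces C set0 by apply: half_space0.
have r_gt0 : (0 < r)%N.
  exact: vc_shattered_size_lt noR (has_size0 X) (vc_shatters_set0 B0).
have lt_r1r : (r.-1 < r)%N by rewrite ltn_predL.
split.
  have vc_bound Y m : has_size Y m -> vc_shatters (half_spaces C) Y -> (m <= r.-1)%N.
    by move=> sizeY shY; rewrite -ltnS prednK // (vc_shattered_size_lt noR sizeY shY).
  have [v vc_v le_vr1] := vc_dim_le (ex_intro _ _ B0) vc_bound.
  by exists v; split; last exact: leq_ltn_trans lt_r1r.
have hellyB : helly_prop (half_spaces C) r.-1.
  by apply: helly_propS (helly_prop_of_no_radon noR) => b [].
have [h helly_h le_hr1] := helly_number_le hellyB.
by exists h; split; last exact: leq_ltn_trans lt_r1r.
Qed.
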